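(* Let $\mathcal D$ be a $k$-oriented Spherical Diagram. If two arcs $a,b\in\mathcal D$ that do not lie on a common great circle have a common vanishing point, then the great circle containing $a$ does not intersect $b$, and the great circle containing $b$ does not intersect $a$.
   Context: A geodesic arc on the unit sphere in $\mathbb R^3$ is the unique shortest curve joining two non-antipodal points. An arc $a$ blocks an arc $b$ (equivalently, $b$ hits $a$) if an endpoint of $b$ lies in the relative interior of $a$. A Spherical Diagram (SD) is a finite non-empty collection $\mathcal D$ of pairwise interior-disjoint geodesic arcs on the unit sphere such that each arc of $\mathcal D$ is blocked by arcs of $\mathcal D$ at each of its endpoints. An SD $\mathcal D$ is $k$-oriented if there exist a set $P$ of $k$ points on the unit sphere (poles), no two antipodal, and a function $f\colon\mathcal D\to P$ such that each arc $a\in\mathcal D$ lies on a great circle through $f(a)$ but contains neither $f(a)$ nor its antipode $-f(a)$. The two points $f(a)$ and $-f(a)$ are the vanishing points of $a$. *)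

From HB Require Import structures.
From mathcomp Require Import all_boot all_order all_algebra.
From mathcomp Require Import reals.
Set Implicit Arguments. Unset Strict Implicit. Unset Printing Implicit Defensive.
Import Order.TTheory GRing.Theory Num.Theory.
Local Open Scope ring_scope.

Section Sphere.
Variable R : realType.

Definition vec := 'rV[R]_3.

Definition dot (u v : vec) : R := \sum_(i < 3) u 0 i * v 0 i.

Definition on_sphere (x : vec) : Prop := dot x x = 1.

Record garc := GArc { ep1 : vec; ep2 : vec }.

Definition valid_arc (a : garc) : Prop :=
  [/\ on_sphere (ep1 a), on_sphere (ep2 a), ep1 a <> ep2 a & ep1 a <> - ep2 a].

(* points of the (closed) shortest geodesic garc joining the endpoints:
   unit vectors in the closed cone spanned by the two endpoints *)
Definition in_arc (a : garc) (x : vec) : Prop :=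
  on_sphere x /\
  exists al be : R, [/\ 0 <= al, 0 <= be & x = al *: ep1 a + be *: ep2 a].

Definition in_relint (a : garc) (x : vec) : Prop :=
  on_sphere x /\
  exists al be : R, [/\ 0 < al, 0 < be & x = al *: ep1 a + be *: ep2 a].

(* the great circle containing the garc (its endpoints are linearly independent) *)
Definition in_circle_of (a : garc) (x : vec) : Prop :=
  on_sphere x /\ exists al be : R, x = al *: ep1 a + be *: ep2 a.

Definition on_great_circle (n x : vec) : Prop := on_sphere x /\ dot n x = 0.

Definition arc_on_circle (n : vec) (a : garc) : Prop :=
  n <> 0 /\ forall x, in_arc a x -> on_great_circle n x.

Definition blocks (a b : garc) : Prop := in_relint a (ep1 b) \/ in_relint a (ep2 b).

(* A spherical diagram, given as a nonempty finite family of arcs indexed by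
   the finite type I (distinct indices give distinct arcs, since relative
   interiors are nonempty and must be disjoint). *)
Definition spherical_diagram (I : finType) (D : I -> garc) : Prop :=
  [/\ 0 < #|I|,
      forall i, valid_arc (D i),
      forall i j, i <> j -> forall x, in_relint (D i) x -> ~ in_relint (D j) x,
      forall i, exists j, in_relint (D j) (ep1 (D i))
    & forall i, exists j, in_relint (D j) (ep2 (D i))]%N.

Definition orientation (I : finType) (D : I -> garc) (k : nat)
    (P : seq vec) (f : I -> vec) : Prop :=
  [/\ size P = k /\ uniq P,
      forall p, p \in P -> on_sphere p,
      forall p q, p \in P -> q \in P -> p <> - q,
      forall i, f i \in P
    & forall i, [/\ exists n, arc_on_circle n (D i) /\ on_great_circle n (f i),
                    ~ in_arc (D i) (f i) & ~ in_arc (D i) (- f i)]].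

Definition k_oriented (I : finType) (D : I -> garc) (k : nat) : Prop :=
  exists P f, orientation D k P f.

Definition vanishing (I : finType) (f : I -> vec) (i : I) (x : vec) : Prop :=
  x = f i \/ x = - f i.

End Sphere.

(* Let p be the common vanishing point, n_a and n_b normals of the great
   circles of a and b.  A point x of b on the great circle of a is, like p and
   -p, orthogonal to both n_a and n_b.  If x is not ±p, the cross product
   w = x × p is nonzero and every vector orthogonal to x and p is a multiple
   of w; so n_a is a multiple of n_b and a, b lie on a common great circle.
   Hence x = ±p, contradicting that an arc contains neither of its vanishing
   points. *)
From mathcomp Require Import all_boot all_order all_algebra reals.
From mathcomp Require Import ring.
Set Implicit Arguments.
Unset Strict Implicit.
Unset Printing Implicit Defensive.
Import Order.TTheory GRing.Theory Num.Theory.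
Local Open Scope ring_scope.

Section Vectors.
Variable R : realType.
Implicit Types (u v w x p c : vec R) (s : R).

Local Notation i0 := (@Ordinal 3 0 isT).
Local Notation i1 := (@Ordinal 3 1 isT).
Local Notation i2 := (@Ordinal 3 2 isT).

Lemma dot3 u v : dot u v = u 0 i0 * v 0 i0 + u 0 i1 * v 0 i1 + u 0 i2 * v 0 i2.
Proof.
rewrite /dot !big_ord_recl big_ord0 addr0 addrA.
by congr (_ * _ + _ * _ + _ * _); congr (_ _ _); apply: val_inj.
Qed.

Lemma row3P u v : [/\ u 0 i0 = v 0 i0, u 0 i1 = v 0 i1 & u 0 i2 = v 0 i2] -> u = v.
Proof.
case=> e0 e1 e2; apply/rowP => -[[|[|[|//]]] lti] /=.
- by rewrite (_ : Ordinal lti = i0) //; apply: val_inj.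
- by rewrite (_ : Ordinal lti = i1) //; apply: val_inj.
- by rewrite (_ : Ordinal lti = i2) //; apply: val_inj.
Qed.

Lemma dotC u v : dot u v = dot v u.
Proof. by apply: eq_bigr => i _; rewrite mulrC. Qed.

Lemma dotDr u v w : dot u (v + w) = dot u v + dot u w.
Proof. by rewrite /dot -big_split; apply: eq_bigr => i _; rewrite mxE mulrDr. Qed.

Lemma dotZr s u v : dot u (s *: v) = s * dot u v.
Proof. by rewrite /dot mulr_sumr; apply: eq_bigr => i _; rewrite mxE mulrCA. Qed.

Lemma dotZl s u v : dot (s *: u) v = s * dot u v.
Proof. by rewrite dotC dotZr dotC. Qed.

Lemma dotNr u v : dot u (- v) = - dot u v.
Proof. by rewrite -scaleN1r dotZr mulN1r. Qed.

Lemma dot0r u : dot u 0 = 0.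
Proof. by rewrite -(scale0r 0) dotZr mul0r. Qed.

Lemma dotvv_eq0 u : (dot u u == 0) = (u == 0).
Proof.
apply/idP/eqP => [|->]; last by rewrite dot0r.
rewrite psumr_eq0 => [/allP u0|i _]; last by rewrite -expr2 sqr_ge0.
apply/rowP => i; rewrite mxE.
by move: (u0 i (mem_index_enum i)); rewrite /= mulf_eq0 orbb => /eqP.
Qed.

Definition cross u v : vec R := \row_(i < 3)
  [:: u 0 i1 * v 0 i2 - u 0 i2 * v 0 i1;
      u 0 i2 * v 0 i0 - u 0 i0 * v 0 i2;
      u 0 i0 * v 0 i1 - u 0 i1 * v 0 i0]`_i.

Lemma crossr0 u : cross u 0 = 0.
Proof. by apply: row3P; rewrite !mxE /= !mulr0 subrr. Qed.

Lemma cross_cross u v w : cross u (cross v w) = dot u w *: v - dot u v *: w.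
Proof. by apply: row3P; rewrite !mxE !dot3 /=; split; ring. Qed.

Lemma dot_cross_cross u v :
  dot (cross u v) (cross u v) = dot u u * dot v v - dot u v ^+ 2.
Proof. by rewrite !dot3 !mxE /=; ring. Qed.

Lemma cross_eq0_on_sphere x p :
  on_sphere x -> on_sphere p -> cross x p = 0 -> x = p \/ x = - p.
Proof.
move=> sx sp w0.
have s2 : dot x p ^+ 2 = 1.
  move: (dot_cross_cross x p); rewrite w0 dot0r sx sp mul1r.
  by move/eqP; rewrite eq_sym subr_eq0 eq_sym => /eqP.
have xE : x = dot x p *: p.
  move: (cross_cross p x p); rewrite w0 crossr0 sp scale1r dotC.
  by move/eqP; rewrite eq_sym subr_eq0 => /eqP.
move/eqP: s2; rewrite sqrf_eq1 => /orP[] /eqP s1; [left | right];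
  by rewrite xE s1 ?scaleN1r ?scale1r.
Qed.

Lemma orthogonal_cross_collinear c x p (w := cross x p) :
  dot c x = 0 -> dot c p = 0 -> dot w w *: c = dot w c *: w.
Proof.
move=> cx cp; have cw0 : cross c w = 0 by rewrite cross_cross cx cp !scale0r subrr.
by apply/eqP; rewrite -subr_eq0 -cross_cross cw0 crossr0.
Qed.

Lemma common_normals_parallel x p na nb :
  on_sphere x -> on_sphere p ->
  dot na x = 0 -> dot na p = 0 -> dot nb x = 0 -> dot nb p = 0 -> nb != 0 ->
  [\/ x = p, x = - p | exists s, na = s *: nb].
Proof.
move=> sx sp nax nap nbx nbp nb0; set w := cross x p.
have [w0|] := eqVneq w 0.
  by case: (cross_eq0_on_sphere sx sp w0) => ?; [apply: Or31 | apply: Or32].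
rewrite -dotvv_eq0 => ww0; apply: Or33.
have nbE := orthogonal_cross_collinear nbx nbp.
have naE := orthogonal_cross_collinear nax nap.
have wnb0 : dot w nb != 0.
  apply: contra nb0 => /eqP wnb.
  have : dot w w *: nb == 0 by rewrite nbE wnb scale0r.
  by rewrite scaler_eq0 (negbTE ww0).
exists (dot w na / dot w nb); apply: (scalerI ww0).
by rewrite naE scalerA mulrC -scalerA nbE scalerA divfK.
Qed.

End Vectors.

Section Arcs.
Variable R : realType.
Implicit Types (A B : garc R) (n x p : vec R).

Lemma on_great_circleN n x : on_great_circle n x -> on_great_circle n (- x).
Proof.
case=> sx nx; split; last by rewrite dotNr nx oppr0.
by rewrite /on_sphere dotNr dotC dotNr opprK.
Qed.

Lemma in_arc_ep1 A : on_sphere (ep1 A) -> in_arc A (ep1 A).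
Proof. by split=> //; exists 1, 0; rewrite ler01 lexx scale1r scale0r addr0. Qed.

Lemma in_arc_ep2 A : on_sphere (ep2 A) -> in_arc A (ep2 A).
Proof. by split=> //; exists 0, 1; rewrite ler01 lexx scale1r scale0r add0r. Qed.

Lemma circle_of_on_great_circle n A x :
  valid_arc A -> arc_on_circle n A -> in_circle_of A x -> on_great_circle n x.
Proof.
move=> [s1 s2 _ _] [_ nA] [sx [al [be xE]]]; split=> //.
have [_ n1] := nA _ (in_arc_ep1 s1); have [_ n2] := nA _ (in_arc_ep2 s2).
by rewrite xE dotDr !dotZr n1 n2 !mulr0 addr0.
Qed.

Lemma arc_misses_circle A B na nb p x :
  valid_arc A -> arc_on_circle na A -> arc_on_circle nb B ->
  on_great_circle na p -> on_great_circle nb p ->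
  ~ in_arc B p -> ~ in_arc B (- p) ->
  ~ (exists n, arc_on_circle n A /\ arc_on_circle n B) ->
  in_arc B x -> ~ in_circle_of A x.
Proof.
move=> vA Ca Cb [sp nap] [_ nbp] Bp Bmp noncommon Bx Ax.
have [sx nax] := circle_of_on_great_circle vA Ca Ax.
have [_ nbx] := Cb.2 x Bx.
have nb0 : nb != 0 by apply/eqP; case: Cb.
case: (common_normals_parallel sx sp nax nap nbx nbp nb0) => [xp|xmp|[s naE]].
- by apply: Bp; rewrite -xp.
- by apply: Bmp; rewrite -xmp.
apply: noncommon; exists na; split=> //; split; first by case: Ca.
by move=> y /Cb.2 [sy nby]; split; rewrite // naE dotZl nby mulr0.
Qed.

Lemma vanishing_point_on_circle (I : finType) (D : I -> garc R) k P f i p :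
  orientation D k P f -> vanishing f i p ->
  exists2 n, arc_on_circle n (D i) &
    [/\ on_great_circle n p, ~ in_arc (D i) p & ~ in_arc (D i) (- p)].
Proof.
move=> [_ _ _ _ /(_ i) [[n [Cn fn]] nf nmf]] [->|->]; exists n => //.
by rewrite opprK; split=> //; apply: on_great_circleN.
Qed.

End Arcs.

Theorem mainTheorem9 (R : realType) (I : finType) (D : I -> garc R) (k : nat)
    (P : seq (vec R)) (f : I -> vec R) (a b : I) :
  spherical_diagram D ->
  orientation D k P f ->
  ~ (exists n : vec R, arc_on_circle n (D a) /\ arc_on_circle n (D b)) ->
  (exists x, vanishing f a x /\ vanishing f b x) ->
  (forall x, in_arc (D b) x -> ~ in_circle_of (D a) x) /\
  (forall x, in_arc (D a) x -> ~ in_circle_of (D b) x).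
Proof.
move=> [_ valid _ _ _] orient noncommon [p [va vb]].
have [na Ca [pa ap amp]] := vanishing_point_on_circle orient va.
have [nb Cb [pb bp bmp]] := vanishing_point_on_circle orient vb.
split=> x.
  exact: (arc_misses_circle (valid a) Ca Cb pa pb bp bmp noncommon).
apply: (arc_misses_circle (valid b) Cb Ca pb pa ap amp).
by case=> n [nb' na']; apply: noncommon; exists n.
Qed.
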